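(* Let $x,y>0$ and let $X=(x,y,x,y,\ldots)$ be the 2-periodic sequence. Then for all sufficiently large $k\in\mathbb{N}$, \[ S(X,2k,k)^{1/k}\ge S(X,2k+2,k+1)^{1/(k+1)}, \] and moreover \[ \lim_{k\to\infty}S(X,2k,k)^{1/k}=\left(\frac{x^{1/2}+y^{1/2}}{2}\right)^2. \]
   Context: For a sequence $X=(x_1,x_2,\ldots)$ of positive reals and integers $1\le k\le n$, $S(X,n,k):=\binom{n}{k}^{-1}\sum_{1\le i_1<\cdots<i_k\le n}x_{i_1}\cdots x_{i_k}$. *)

From HB Require Import structures.
From mathcomp Require Import all_boot all_order all_algebra.
From mathcomp Require Import all_classical all_reals all_analysis.
Set Implicit Arguments. Unset Strict Implicit. Unset Printing Implicit Defensive.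
Import Order.TTheory GRing.Theory Num.Theory.
Local Open Scope ring_scope.

(* S(X,n,k) = binom(n,k)^{-1} * sum over k-subsets {i_1<...<i_k} of {1..n}
   of x_{i_1}...x_{i_k}.  Indices are 0-based here: X 0 = x_1, X 1 = x_2, ... *)
Definition Smean (R : realType) (X : nat -> R) (n k : nat) : R :=
  ('C(n, k)%:R)^-1 *
  \sum_(A : {set 'I_n} | #|A| == k) \prod_(i in A) X (nat_of_ord i).

Definition alt2 (R : realType) (x y : R) : nat -> R :=
  fun i => if odd i then y else x.

(* Put s = sqrt(x y) and c = (sqrt x - sqrt y)^2, so that the generating polynomial
   of X factors as (1 + x t)(1 + y t) = c t + (1 + s t)^2.  Reading off the coefficient
   of t^k in its k-th power gives, with g_i = C(2i,i)/4^i,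
     C(2k,k) S(X,2k,k) = sum_i C(k,i) c^(k-i) (4s)^i g_i,
   hence S(X,2k,k) = M^k h_k, where M = (c + 4s)/4 = ((sqrt x + sqrt y)/2)^2 and h_k is
   the binomial average of g_i / g_k.  The recursion g_(i+1) = g_i (1 - 1/(2i+2)) and
   Chebyshev's sum inequality give h_(k+1) <= h_k (1 + p^(k+1)/(2k+1)) with
   p = c/(c + 4s) < 1, while h_k >= 1 + p/(2k+1) for k >= 1.  So h is bounded and
   h_k^(1/k) -> 1; and as soon as 2k p^k <= 1 the growth factor of h is too small
   to beat this lower bound, which yields h_(k+1)^k <= h_k^(k+1). *)

From HB Require Import structures.
From mathcomp Require Import all_boot all_order all_algebra.
From mathcomp Require Import all_classical all_reals all_analysis.
From mathcomp Require Import ring lra zify.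
Set Implicit Arguments. Unset Strict Implicit. Unset Printing Implicit Defensive.
Import Order.TTheory GRing.Theory Num.Theory.
Import numFieldNormedType.Exports.
Local Open Scope classical_set_scope.
Local Open Scope ring_scope.

Section PolyCoef.
Variable R : comNzRingType.

Lemma esym_coef n k (X : nat -> R) :
  \sum_(A : {set 'I_n} | #|A| == k) \prod_(i in A) X i =
  (\prod_(i < n) ((X i)%:P * 'X + 1))`_k.
Proof.
rewrite bigA_distr coef_sum big_mkcond /=; apply: eq_bigr => A _.
rewrite -big_mkcond /= big_split /= prodr_const -rmorph_prod coefCM coefXn.
by rewrite eq_sym; case: eqP; rewrite ?mulr1 ?mulr0.
Qed.

Lemma coef_binom_poly (s : R) n j : ((1 + s%:P * 'X) ^+ n)`_j = 'C(n, j)%:R * s ^+ j.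
Proof.
rewrite exprDn coef_sum.
transitivity (\sum_(l < n.+1 | l == j :> nat) s ^+ l *+ 'C(n, l)).
  rewrite [RHS]big_mkcond; apply: eq_bigr => l _ /=.
  rewrite expr1n mul1r exprMn -rmorphXn coefMn coefCM coefXn eq_sym.
  by case: eqP; rewrite ?mulr1 ?mulr0 ?mul0rn.
rewrite (big_ord1_eq _ (fun l => s ^+ l *+ 'C(n, l))).
by case: ltnP => [_|/bin_small->]; rewrite ?mulr_natl ?mul0r.
Qed.

Lemma coef_central_poly (c s : R) k :
  ((c%:P * 'X + (1 + s%:P * 'X) ^+ 2) ^+ k)`_k =
  \sum_(i < k.+1) 'C(k, i)%:R * c ^+ (k - i) * (s ^+ i * 'C(2 * i, i)%:R).
Proof.
rewrite exprDn coef_sum; apply: eq_bigr => i _.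
rewrite coefMn exprMn -rmorphXn -exprM -mulrA coefCM coefXnM.
have hi : (i <= k)%N by rewrite -ltnS.
rewrite ltnNge leq_subr /= subKn // coef_binom_poly mulnC -mulr_natl; ring.
Qed.

Lemma poly_factor_sqrt (x y s : R) : s * s = x * y ->
  (x%:P * 'X + 1) * (y%:P * 'X + 1) = (x + y - 2 * s)%:P * 'X + (1 + s%:P * 'X) ^+ 2.
Proof.
move=> hs; rewrite rmorphB rmorphD rmorphM /= rmorph_nat.
have hP : x%:P * y%:P = s%:P * s%:P :> {poly R} by rewrite -!polyCM hs.
transitivity ((x%:P * y%:P) * 'X ^+ 2 + (x%:P + y%:P) * 'X + 1); first ring.
by rewrite hP; ring.
Qed.

End PolyCoef.

Lemma mul_bin_central i :
  (i.+1 * 'C((2 * i).+2, i.+1) = 2 * (2 * i).+1 * 'C(2 * i, i))%N.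
Proof.
have h1 := mul_bin_diag (2 * i).+2 i.
have h2 := mul_bin_down (2 * i).+1 i.
rewrite /= (_ : ((2 * i).+1 - i = i.+1)%N) in h2; last lia.
apply/eqP; rewrite -(eqn_pmul2l (ltn0Sn i)); apply/eqP.
rewrite mulnA (mulnC i.+1) -mulnA -h1 /=; nia.
Qed.

Section CentralBinomial.
Variable R : realFieldType.

Definition cbinr i : R := 'C(2 * i, i)%:R / 4 ^+ i.

Lemma cbinr0 : cbinr 0 = 1.
Proof. by rewrite /cbinr expr0 divr1. Qed.

Lemma cbinr_gt0 i : 0 < cbinr i.
Proof. by rewrite /cbinr divr_gt0 ?exprn_gt0 // ltr0n bin_gt0 leq_pmull. Qed.

Lemma cbinrS i : cbinr i.+1 = cbinr i * (1 - (2 * i.+1%:R)^-1).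
Proof.
have i1 : i%:R + 1 != 0 :> R by rewrite gt_eqF // ltr_wpDl.
have := congr1 (fun n => n%:R : R) (mul_bin_central i).
rewrite /= !natrM -!natr1 => h.
rewrite /cbinr (_ : 2 * i.+1 = (2 * i).+2)%N ?mulnS // exprS -!natr1.
rewrite (_ : 'C(_, _)%:R = 2 * (2 * i%:R + 1) * 'C(2 * i, i)%:R / (i%:R + 1)).
  by field; rewrite i1 expf_neq0 // gt_eqF //; lra.
by apply: (mulfI i1); rewrite h; field.
Qed.

Lemma cbinrS_le i : cbinr i.+1 <= cbinr i.
Proof. by rewrite cbinrS ger_pMr ?cbinr_gt0 // gerBl invr_ge0 mulr_ge0 ?ler0n. Qed.

Lemma cbinr_ge_inv i : (2 * i%:R + 1)^-1 <= cbinr i.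
Proof.
elim: i => [|i IH]; first by rewrite cbinr0 mulr0 add0r invr1.
have i0 : (0 : R) <= i%:R by rewrite ler0n.
rewrite cbinrS -[i.+1%:R]natr1.
apply: le_trans (_ : (2 * i%:R + 2)^-1 <= _); first by rewrite lef_pV2 ?posrE; lra.
rewrite (_ : (2 * i%:R + 2)^-1 = (2 * i%:R + 1)^-1 * (1 - (2 * (i%:R + 1))^-1)).
  by rewrite ler_wpM2r // subr_ge0 invf_le1; lra.
by field; rewrite !gt_eqF //; lra.
Qed.

Lemma cbinr_nonincreasing i j : (i <= j)%N -> cbinr j <= cbinr i.
Proof.
move=> /subnK <-; elim: (j - i)%N => [|n IH] //.
by rewrite addSn; apply: le_trans (cbinrS_le _) IH.
Qed.

End CentralBinomial.

Lemma chebyshev_sum (R : realDomainType) n (w f g : nat -> R) :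
  (forall i, 0 <= w i) ->
  (forall i j, (i <= j)%N -> f j <= f i) ->
  (forall i j, (i <= j)%N -> g j <= g i) ->
  (\sum_(i < n) w i * f i) * (\sum_(i < n) w i * g i) <=
  (\sum_(i < n) w i) * (\sum_(i < n) w i * f i * g i).
Proof.
move=> w0 fd gd.
set A := \sum_(i < n) w i; set B := \sum_(i < n) w i * f i.
set C := \sum_(i < n) w i * g i; set D := \sum_(i < n) w i * f i * g i.
have pair_ge0 (i j : 'I_n) : 0 <= w i * w j * ((f i - f j) * (g i - g j)).
  apply: mulr_ge0; first exact: mulr_ge0.
  case: (leqP i j) => hij; first by rewrite mulr_ge0 // subr_ge0 ?fd ?gd.
  by rewrite mulr_le0 // subr_le0 ?fd ?gd // ltnW.
have inner (i : 'I_n) : \sum_(j < n) w i * w j * ((f i - f j) * (g i - g j)) =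
    w i * f i * g i * A + D * w i - w i * f i * C - B * (w i * g i).
  rewrite /A /B /C /D !mulr_sumr !mulr_suml -big_split -!sumrB /=.
  by apply: eq_bigr => j _; ring.
have : 0 <= \sum_(i < n) \sum_(j < n) w i * w j * ((f i - f j) * (g i - g j)).
  by do 2!(apply: sumr_ge0 => ? _); exact: pair_ge0.
rewrite (eq_bigr _ (fun i _ => inner i)) !sumrB big_split /=.
rewrite -!mulr_suml -!mulr_sumr -/A -/B -/C -/D.
rewrite (_ : _ - B * C - B * C = 2 * (A * D - B * C)); last by ring.
by rewrite pmulr_rge0 // subr_ge0.
Qed.

Section Bernoulli.
Variable R : realFieldType.

Lemma bernoulli_ineq (x : R) n : 0 <= x -> 1 + n%:R * x <= (1 + x) ^+ n.
Proof.
move=> x0; elim: n => [|n IH]; first by rewrite expr0 mul0r addr0.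
have n0 : (0 : R) <= n%:R by rewrite ler0n.
rewrite exprS -[n.+1%:R]natr1; apply: le_trans (_ : (1 + x) * (1 + n%:R * x) <= _); first nra.
by rewrite ler_wpM2l // addr_ge0.
Qed.

Lemma bernoulli_ineq2 (x : R) n : 0 <= x ->
  1 + n%:R * x + n%:R * (n%:R - 1) / 2 * x ^+ 2 <= (1 + x) ^+ n.
Proof.
move=> x0; elim: n => [|n IH]; first by rewrite expr0 !mul0r !addr0.
have n0 : (0 : R) <= n%:R by rewrite ler0n.
rewrite exprS -[n.+1%:R]natr1.
apply: le_trans (_ : (1 + x) * (1 + n%:R * x + n%:R * (n%:R - 1) / 2 * x ^+ 2) <= _).
  have x3 : 0 <= n%:R * x ^+ 3 by rewrite mulr_ge0 // exprn_ge0.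
  rewrite -subr_ge0 (_ : _ - _ = (n%:R * x ^+ 3) * (n%:R - 1) / 2); last by field.
  case: n IH n0 x3 => [|n] _ n0 x3; first by rewrite !mul0r.
  by rewrite divr_ge0 // mulr_ge0 // subr_ge0 ler1n.
by rewrite [(1 + x) ^+ n.+1]exprS ler_wpM2l // addr_ge0.
Qed.

Lemma exprn_1Dx_le (u : R) n : 0 <= u -> 2 * n%:R * u <= 1 ->
  (1 + u) ^+ n <= 1 + 2 * n%:R * u.
Proof.
move=> u0; elim: n => [|n IH] h; first by rewrite expr0 mulr0 mul0r addr0.
have n0 : (0 : R) <= n%:R by rewrite ler0n.
have h' : 2 * n%:R * u <= 1 by move: h; rewrite -[n.+1%:R]natr1; nra.
rewrite exprS; apply: le_trans (_ : (1 + u) * (1 + 2 * n%:R * u) <= _).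
  by rewrite ler_wpM2l ?IH //; lra.
by move: h; rewrite -[n.+1%:R]natr1; nra.
Qed.

End Bernoulli.

Lemma eventually_mulrn_expr_le1 (R : archiRealFieldType) (p : R) : 0 <= p -> p < 1 ->
  exists K : nat, forall k, (K <= k)%N -> 2 * k%:R * p ^+ k <= 1.
Proof.
move=> p0 p1; have [->|pn0] := eqVneq p 0.
  by exists 1%N => -[|k] // _; rewrite expr0n mulr0.
have pp : 0 < p by rewrite lt_def pn0.
set h := p^-1 - 1; have h0 : 0 < h by rewrite subr_gt0 invf_gt1.
set B := 4 / h ^+ 2; have B0 : 0 <= B by rewrite divr_ge0 // exprn_ge0 // ltW.
exists (Num.Def.archi_bound B).+2 => k hk.
have Bk : B + 1 < k%:R.
  have := archi_boundP B0.
  have : ((Num.Def.archi_bound B).+2%:R : R) <= k%:R by rewrite ler_nat.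
  rewrite -!natr1; lra.
have pk : 0 < p ^+ k by rewrite exprn_gt0.
have k0 : (0 : R) <= k%:R by rewrite ler0n.
have := bernoulli_ineq2 k (ltW h0); rewrite (_ : 1 + h = p^-1); last by rewrite /h; ring.
rewrite exprVn => H.
have H2 : k%:R * (k%:R - 1) / 2 * h ^+ 2 <= (p ^+ k)^-1.
  apply: le_trans H; rewrite -subr_ge0 addrK.
  have := mulr_ge0 k0 (ltW h0); lra.
rewrite -(@ler_pM2r _ ((p ^+ k)^-1)) ?invr_gt0 // mul1r mulfK ?gt_eqF //.
apply: le_trans H2.
have h2 : 0 < h ^+ 2 by rewrite exprn_gt0.
have hB : B * h ^+ 2 = 4 by rewrite /B mulfVK // gt_eqF.
have : 4 <= (k%:R - 1) * h ^+ 2 by rewrite -hB ler_wpM2r ?ltW //; lra.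
nra.
Qed.

Lemma expr_succ_le_of_step (R : realFieldType) (p : R) (h : nat -> R) k :
  0 <= p -> p < 1 -> (0 < k)%N -> 2 * k%:R * p ^+ k <= 1 ->
  1 + p / (2 * k%:R + 1) <= h k -> 0 <= h k.+1 ->
  h k.+1 <= h k * (1 + p ^+ k.+1 / (2 * k%:R + 1)) ->
  h k.+1 ^+ k <= h k ^+ k.+1.
Proof.
move=> p0 p1 k0 small lb hk1 step.
have k1 : (1 : R) <= k%:R by rewrite ler1n.
set u := p ^+ k.+1 / (2 * k%:R + 1) in step.
have u0 : 0 <= u by rewrite divr_ge0 ?exprn_ge0 //; lra.
have hk0 : 0 <= h k by apply: le_trans lb; rewrite addr_ge0 // divr_ge0 //; lra.
have pk : 2 * k%:R * u <= p / (2 * k%:R + 1).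
  rewrite /u mulrA; apply: ler_wpM2r; first by rewrite invr_ge0; lra.
  by rewrite exprS; nra.
have bern : (1 + u) ^+ k <= h k.
  apply: le_trans (exprn_1Dx_le u0 _) _; last by apply: le_trans lb; rewrite lerD2l.
  apply: le_trans pk _; rewrite ler_pdivrMr; lra.
apply: le_trans (_ : (h k * (1 + u)) ^+ k <= _).
  by apply: lerXn2r; rewrite ?nnegrE // mulr_ge0 //; lra.
by rewrite exprMn exprSr ler_wpM2l ?exprn_ge0.
Qed.

Lemma le_geometric_of_step (R : realFieldType) (p : R) (h : nat -> R) :
  0 <= p -> p < 1 -> h 0 = 1 -> (forall k, h k.+1 <= h k + p ^+ k.+1) ->
  forall k, h k <= (1 - p)^-1.
Proof.
move=> p0 p1 h0 step k.
have p1' : 0 < 1 - p by lra.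
suff : h k <= (1 - p ^+ k.+1) / (1 - p).
  by move/le_trans; apply; apply: ler_piMl; rewrite ?invr_ge0 ?gerBl ?exprn_ge0 // ltW.
elim: k => [|k IH]; first by rewrite h0 expr1 divff // gt_eqF.
rewrite -(lerD2r (p ^+ k.+1)) (_ : _ / _ + _ = (1 - p ^+ k.+2) / (1 - p)) in IH.
  exact: le_trans (step k) IH.
by rewrite [p ^+ k.+2]exprS; field; rewrite gt_eqF.
Qed.

Section BinomialWeights.
Variable R : realFieldType.
Variables c s : R.
Hypotheses (c_ge0 : 0 <= c) (s_gt0 : 0 < s).
Local Notation Q := (c + 4 * s).

Let Q_gt0 : 0 < Q. Proof. by rewrite ltr_wpDl // mulr_gt0. Qed.

Let p_ge0 : 0 <= c / Q. Proof. by rewrite divr_ge0 // ltW. Qed.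

Let p_lt1 : c / Q < 1.
Proof. by rewrite ltr_pdivrMr // mul1r ltr_pwDr // mulr_gt0. Qed.

Definition binw k i : R := 'C(k, i)%:R * c ^+ (k - i) * (4 * s) ^+ i.

Definition Tsum k : R := \sum_(i < k.+1) binw k i * cbinr R i.

Lemma sum_binw k : \sum_(i < k.+1) binw k i = Q ^+ k.
Proof. by rewrite exprDn; apply: eq_bigr => i _; rewrite /binw mulr_natl mulrnAl. Qed.

Lemma binw_ge0 k i : 0 <= binw k i.
Proof. by rewrite /binw !mulr_ge0 ?ler0n ?exprn_ge0 // mulr_ge0 // ltW. Qed.

Lemma sum_binw_div_succ k :
  k.+1%:R * (4 * s) * \sum_(i < k.+1) binw k i / i.+1%:R = Q ^+ k.+1 - c ^+ k.+1.
Proof.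
rewrite exprDn [in RHS]big_ord_recl /= subn0 expr0 mulr1 bin0 mulr1n addrC addKr.
rewrite mulr_sumr; apply: eq_bigr => i _.
have i1 : i.+1%:R != 0 :> R by rewrite pnatr_eq0.
have := congr1 (fun n => n%:R : R) (mul_bin_diag k.+1 i); rewrite /= !natrM => h.
rewrite /binw /bump /= add1n subSS -mulr_natr exprS; apply: (mulfI i1).
transitivity (k.+1%:R * 'C(k, i)%:R * (4 * s) * (c ^+ (k - i) * (4 * s) ^+ i)).
  by field; rewrite addrC natr1.
by rewrite h; ring.
Qed.

Lemma TsumS k : Tsum k.+1 = c * Tsum k + 4 * s * \sum_(i < k.+1) binw k i * cbinr R i.+1.
Proof.
rewrite /Tsum big_ord_recl [in c * _]big_ord_recl /= mulrDr -addrA; congr (_ + _).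
  by rewrite /binw !bin0 !subn0 !expr0 exprS; ring.
have split_binw (i : 'I_k.+1) : binw k.+1 (bump 0 i) * cbinr R (bump 0 i) =
    'C(k, i.+1)%:R * c ^+ (k - i) * (4 * s) ^+ i.+1 * cbinr R i.+1
    + 4 * s * (binw k i * cbinr R i.+1).
  by rewrite /binw /bump /= add1n subSS binS natrD exprS; ring.
rewrite (eq_bigr _ (fun i _ => split_binw i)) big_split /= -mulr_sumr; congr (_ + _).
rewrite big_ord_recr /= bin_small // !mul0r addr0 mulr_sumr.
apply: eq_bigr => i _; have hi := ltn_ord i.
rewrite /binw /bump /= add1n (_ : k - i = (k - i.+1).+1)%N; last lia.
by rewrite exprS; ring.
Qed.

Lemma TsumS_div_succ k :
  Tsum k.+1 = Q * Tsum k - 2 * s * \sum_(i < k.+1) binw k i * cbinr R i / i.+1%:R.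
Proof.
rewrite TsumS; under eq_bigr => i _ do rewrite cbinrS.
rewrite (_ : \sum_(i < k.+1) _ = Tsum k - (\sum_(i < k.+1) binw k i * cbinr R i / i.+1%:R) / 2).
  by field.
rewrite /Tsum mulr_suml -sumrB; apply: eq_bigr => i _.
by field; rewrite addrC natr1 pnatr_eq0.
Qed.

Lemma Tsum_step k :
  Tsum k.+1 * (2 * k%:R + 2) * Q ^+ k <= Tsum k * (Q * (2 * k%:R + 1) * Q ^+ k + c ^+ k.+1).
Proof.
set T := Tsum k; set B := \sum_(i < k.+1) binw k i * cbinr R i / i.+1%:R.
set X := \sum_(i < k.+1) binw k i / i.+1%:R.
have cheb : T * X <= Q ^+ k * B.
  have := chebyshev_sum k.+1 (binw_ge0 k) (@cbinr_nonincreasing R) (g := fun i => i.+1%:R^-1).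
  rewrite sum_binw; apply => i j ij.
  by rewrite lef_pV2 ?posrE ?ltr0n // ler_nat.
have -> : c ^+ k.+1 = Q ^+ k.+1 - k.+1%:R * (4 * s) * X.
  by rewrite sum_binw_div_succ; ring.
rewrite TsumS_div_succ -/T -/B -subr_ge0 exprS -[k.+1%:R]natr1.
rewrite (_ : _ - _ = 4 * s * (k%:R + 1) * (Q ^+ k * B - T * X)); last by ring.
rewrite mulr_ge0 ?subr_ge0 //; apply: mulr_ge0; first by rewrite mulr_ge0 // ltW.
by rewrite addr_ge0 ?ler0n.
Qed.

Lemma Tsum_lb j :
  cbinr R j * (Q ^+ j.+1 - (4 * s) ^+ j.+1) + (4 * s) ^+ j.+1 * cbinr R j.+1 <= Tsum j.+1.
Proof.
have top : binw j.+1 j.+1 = (4 * s) ^+ j.+1 by rewrite /binw binn subnn expr0 mulr1 mul1r.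
rewrite /Tsum big_ord_recr /= top lerD2r -(sum_binw j.+1) big_ord_recr /= top addrK.
rewrite mulr_sumr; apply: ler_sum => i _.
by rewrite mulrC ler_wpM2l ?binw_ge0 // cbinr_nonincreasing // -ltnS.
Qed.

Lemma Tsum_le k : Tsum k <= Q ^+ k.
Proof.
rewrite -sum_binw; apply: ler_sum => i _.
by rewrite ler_piMr ?binw_ge0 // -(cbinr0 R) cbinr_nonincreasing.
Qed.

Definition ratio k : R := Tsum k / (Q ^+ k * cbinr R k).

Lemma ratio0 : ratio 0 = 1.
Proof. by rewrite /ratio /Tsum big_ord1 /binw bin0 !expr0 cbinr0 !mulr1 divr1. Qed.

Lemma ratio_step k : ratio k.+1 <= ratio k * (1 + (c / Q) ^+ k.+1 / (2 * k%:R + 1)).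
Proof.
have k0 : (0 : R) <= k%:R by rewrite ler0n.
have g0 := cbinr_gt0 R k; set g := cbinr R k in g0 *.
set D := Q * Q ^+ k * g * (2 * k%:R + 1) * Q ^+ k.
have D0 : 0 < D.
  apply: mulr_gt0 (exprn_gt0 _ Q_gt0); apply: mulr_gt0; last lra.
  exact: mulr_gt0 (mulr_gt0 Q_gt0 (exprn_gt0 _ Q_gt0)) g0.
rewrite (_ : ratio k.+1 = Tsum k.+1 * (2 * k%:R + 2) * Q ^+ k / D); last first.
  rewrite /ratio /D cbinrS -/g exprS -[k.+1%:R]natr1.
  by field; rewrite !gt_eqF ?exprn_gt0 //; lra.
rewrite (_ : ratio k * _ = Tsum k * (Q * (2 * k%:R + 1) * Q ^+ k + c ^+ k.+1) / D); last first.
  rewrite /ratio /D -/g expr_div_n [Q ^+ k.+1]exprS.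
  by field; rewrite !gt_eqF ?exprn_gt0 //; lra.
by apply: ler_wpM2r; [rewrite invr_ge0 ltW | exact: Tsum_step].
Qed.

Lemma ratio_lb k : (0 < k)%N -> 1 + c / Q / (2 * k%:R + 1) <= ratio k.
Proof.
case: k => // j _.
have j0 : (0 : R) <= j%:R by rewrite ler0n.
have g0 := cbinr_gt0 R j; set g := cbinr R j in g0 *.
set S := (4 * s) ^+ j; set Qj := Q ^+ j.
have Qj0 : 0 < Qj by rewrite exprn_gt0.
have gap : c * Qj <= Q * Qj - 4 * s * S.
  have s4 : 0 <= 4 * s by rewrite mulr_ge0 // ltW.
  have SQ : S <= Qj by rewrite lerXn2r ?nnegrE ?lerDr // ltW.
  rewrite (_ : _ - _ = c * Qj + 4 * s * (Qj - S)); last by ring.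
  by rewrite lerDl mulr_ge0 // subr_ge0.
rewrite /ratio ler_pdivlMr; last first.
  by rewrite mulr_gt0 ?exprn_gt0 // cbinrS -/g mulr_gt0 // subr_gt0 invf_lt1 -[j.+1%:R]natr1; lra.
apply: le_trans (Tsum_lb j); rewrite cbinrS -/g !exprS -/S -/Qj -[j.+1%:R]natr1 -subr_ge0.
rewrite (_ : _ - _ = g / (2 * j%:R + 2) *
    (Q * Qj - 4 * s * S - c * Qj * ((2 * j%:R + 1) / (2 * j%:R + 3)))); last first.
  by field; rewrite !gt_eqF //; lra.
apply: mulr_ge0; first by apply: divr_ge0 (ltW g0) _; lra.
rewrite subr_ge0 (le_trans _ gap) // ler_piMr ?mulr_ge0 ?(ltW Qj0) //.
by rewrite ler_pdivrMr; lra.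
Qed.

Lemma ratio_le k : ratio k <= 2 * k%:R + 1.
Proof.
have Qk0 : 0 < Q ^+ k := exprn_gt0 _ Q_gt0.
rewrite /ratio ler_pdivrMr; last exact: mulr_gt0 Qk0 (cbinr_gt0 R k).
apply: le_trans (Tsum_le k) _; rewrite mulrCA ler_pMr //.
by rewrite -ler_pdivrMl ?mulr1 ?cbinr_ge_inv // ltr_wpDl ?mulr_ge0 ?ler0n.
Qed.

Lemma ratio_step_add k : ratio k.+1 <= ratio k + (c / Q) ^+ k.+1.
Proof.
apply: le_trans (ratio_step k) _; rewrite mulrDr mulr1 lerD2l mulrCA.
apply: ler_piMr; first exact: exprn_ge0.
by rewrite ler_pdivrMr ?mul1r ?ratio_le // ltr_wpDl ?mulr_ge0 ?ler0n.
Qed.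

Lemma ratio_ge1 k : 1 <= ratio k.
Proof.
case: k => [|k]; first by rewrite ratio0.
apply: le_trans (ratio_lb (ltn0Sn k)).
by rewrite lerDl divr_ge0 // addr_ge0 ?mulr_ge0 ?ler0n.
Qed.

Lemma ratio_le_geometric k : ratio k <= (1 - c / Q)^-1.
Proof. exact: le_geometric_of_step p_ge0 p_lt1 ratio0 ratio_step_add k. Qed.

Lemma ratio_expr_succ_le k : (0 < k)%N -> 2 * k%:R * (c / Q) ^+ k <= 1 ->
  ratio k.+1 ^+ k <= ratio k ^+ k.+1.
Proof.
move=> k0 small; apply: expr_succ_le_of_step p_ge0 p_lt1 k0 small (ratio_lb k0) _ _.
  exact: le_trans ler01 (ratio_ge1 _).
exact: ratio_step.
Qed.

End BinomialWeights.

Section RealRoots.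
Variable R : realType.

Lemma powR_inv_exprn (a : R) k : 0 <= a -> (0 < k)%N -> powR a k%:R^-1 ^+ k = a.
Proof.
move=> a0 k0; rewrite -powR_mulrn ?powR_ge0 // -powRrM mulVf ?powRr1 //.
by rewrite pnatr_eq0 -lt0n.
Qed.

Lemma exprn_powR_inv (b : R) k : 0 <= b -> (0 < k)%N -> powR (b ^+ k) k%:R^-1 = b.
Proof.
move=> b0 k0; rewrite -powR_mulrn // -powRrM mulfV ?powRr1 //.
by rewrite pnatr_eq0 -lt0n.
Qed.

Lemma powR_inv_mul_exprn (M a : R) k : 0 <= M -> 0 <= a -> (0 < k)%N ->
  powR (M ^+ k * a) k%:R^-1 = M * powR a k%:R^-1.
Proof.
by move=> M0 a0 k0; rewrite powRM ?exprn_ge0 // exprn_powR_inv.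
Qed.

Lemma powR_inv_succ_le (a b : R) k : 0 <= a -> 0 <= b -> (0 < k)%N ->
  a ^+ k <= b ^+ k.+1 -> powR a k.+1%:R^-1 <= powR b k%:R^-1.
Proof.
move=> a0 b0 k0 ab.
have kk : (0 < k.+1 * k)%N by rewrite muln_gt0 k0.
rewrite -(ler_pXn2r kk) ?nnegrE ?powR_ge0 //.
by rewrite exprM powR_inv_exprn // mulnC exprM powR_inv_exprn.
Qed.

Lemma powR_inv_bounds (a H : R) k : 1 <= a <= H -> (0 < k)%N ->
  1 <= powR a k%:R^-1 <= 1 + (H - 1) / k%:R.
Proof.
move=> /andP[a1 aH] k0; have k1 : (1 : R) <= k%:R by rewrite ler1n.
have Hk : 0 <= (H - 1) / k%:R by rewrite divr_ge0 ?ler0n // subr_ge0 (le_trans a1).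
apply/andP; split.
  apply: le_trans (_ : powR 1 k%:R^-1 <= _); first by rewrite powR1.
  by rewrite ge0_ler_powR ?invr_ge0 ?ler0n ?nnegrE //; lra.
rewrite -[X in _ <= X](@exprn_powR_inv _ k) ?addr_ge0 //.
rewrite ge0_ler_powR ?invr_ge0 ?ler0n ?nnegrE ?exprn_ge0 ?addr_ge0 //.
  exact: le_trans ler01 a1.
apply: le_trans aH (le_trans _ (bernoulli_ineq k Hk)).
by rewrite mulrC divfK ?gt_eqF //; lra.
Qed.

Lemma powR_inv_cvg1 (H : R) (h : nat -> R) : (forall k, 1 <= h k <= H) ->
  (fun k => powR (h k) k%:R^-1) @ \oo --> (1 : R).
Proof.
move=> hH; have H1 : 1 <= H by have /andP[/le_trans] := hH 0%N; apply.
apply: (@squeeze_cvgr _ _ _ _ (fun=> 1) (fun k => 1 + (2 * (H - 1)) * harmonic k)).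
- near=> k; have k0 : (0 < k)%N by near: k; exact: nbhs_infty_gt.
  have /andP[-> hk] := powR_inv_bounds (hH k) k0; apply: le_trans hk _.
  have k1 : (1 : R) <= k%:R by rewrite ler1n.
  rewrite lerD2l /harmonic /= -[k.+1%:R]natr1 ler_pdivrMr; last lra.
  by rewrite mulrAC ler_pdivlMr; [nra | lra].
- exact: cvg_cst.
- rewrite -[X in _ --> X]addr0; apply: cvgD; first exact: cvg_cst.
  rewrite -(mulr0 (2 * (H - 1))); apply: cvgM; [exact: cvg_cst | exact: cvg_harmonic].
Unshelve. all: end_near.
Qed.

Lemma powR_inv_mul_cvg (M H : R) (h : nat -> R) : 0 < M ->
  (forall k, 1 <= h k <= H) ->
  (fun k => powR (M ^+ k * h k) k%:R^-1) @ \oo --> M.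
Proof.
move=> M0 hH; suff : (fun k => M * powR (h k) k%:R^-1) @ \oo --> M.
  apply: cvg_trans; apply: near_eq_cvg; near=> k.
  rewrite powR_inv_mul_exprn ?ltW //; first by have /andP[/(lt_le_trans ltr01)] := hH k.
  by near: k; exact: nbhs_infty_gt.
rewrite -[X in _ --> X]mulr1; apply: cvgM; [exact: cvg_cst | exact: powR_inv_cvg1 hH].
Unshelve. all: end_near.
Qed.

End RealRoots.

Lemma prod_alt2_poly (R : realType) (x y : R) k :
  \prod_(i < 2 * k) ((alt2 x y i)%:P * 'X + 1) = ((x%:P * 'X + 1) * (y%:P * 'X + 1)) ^+ k.
Proof.
elim: k => [|k IH]; first by rewrite big_ord0.
rewrite (_ : 2 * k.+1 = (2 * k).+2)%N ?mulnS //.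
have mk n := big_mkord xpredT (fun i => (alt2 x y i)%:P * 'X + 1 : {poly R}) (n := n).
rewrite -mk in IH; rewrite -mk !big_nat_recr //= IH exprS /alt2.
by rewrite /= oddM /= -mulrA mulrC.
Qed.

Lemma Smean_alt2 (R : realType) (x y c s : R) k :
  c = x + y - 2 * s -> s * s = x * y -> 0 <= c -> 0 < s ->
  Smean (alt2 x y) (2 * k) k = ((c + 4 * s) / 4) ^+ k * ratio c s k.
Proof.
move=> hc hs c0 s0; have Q0 : 0 < c + 4 * s by rewrite ltr_wpDl // mulr_gt0.
rewrite /Smean esym_coef prod_alt2_poly (poly_factor_sqrt hs) -hc coef_central_poly.
rewrite (_ : \sum_(i < k.+1) _ = Tsum c s k).
  rewrite /ratio /cbinr expr_div_n; field.
  by rewrite !gt_eqF ?exprn_gt0 // ltr0n bin_gt0 leq_pmull.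
by apply: eq_bigr => i _; rewrite /binw /cbinr exprMn; field; rewrite expf_neq0.
Qed.

Theorem lemma4p1 (R : realType) (x y : R) (hx : 0 < x) (hy : 0 < y) :
  (exists K : nat, forall k : nat, (K <= k)%N ->
     powR (Smean (alt2 x y) (2 * k.+1) k.+1) (k.+1%:R)^-1
       <= powR (Smean (alt2 x y) (2 * k) k) (k%:R)^-1)
  /\
  ((fun k : nat => powR (Smean (alt2 x y) (2 * k) k) (k%:R)^-1) @ \oo
     --> ((Num.sqrt x + Num.sqrt y) / 2) ^+ 2).
Proof.
set a := Num.sqrt x; set b := Num.sqrt y.
have xa : x = a ^+ 2 by rewrite sqr_sqrtr // ltW.
have yb : y = b ^+ 2 by rewrite sqr_sqrtr // ltW.
set s := a * b; set c := x + y - 2 * s.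
have s0 : 0 < s by rewrite mulr_gt0 ?sqrtr_gt0.
have c0 : 0 <= c by rewrite (_ : c = (a - b) ^+ 2) ?sqr_ge0 // /c /s xa yb; ring.
have Q0 : 0 < c + 4 * s by rewrite ltr_wpDl // mulr_gt0.
set M := (c + 4 * s) / 4; have M0 : 0 < M by rewrite divr_gt0.
have -> : ((a + b) / 2) ^+ 2 = M by rewrite /M /c /s xa yb; field.
have eS k : Smean (alt2 x y) (2 * k) k = M ^+ k * ratio c s k.
  by apply: Smean_alt2 => //; rewrite /s xa yb; ring.
have r0 k : 0 <= ratio c s k := le_trans ler01 (ratio_ge1 c0 s0 k).
split.
  have p1 : c / (c + 4 * s) < 1 by rewrite ltr_pdivrMr // mul1r ltr_pwDr // mulr_gt0.
  have [K HK] := eventually_mulrn_expr_le1 (divr_ge0 c0 (ltW Q0)) p1.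
  exists (maxn K 1) => k; rewrite geq_max => /andP[Kk k1].
  rewrite !eS !powR_inv_mul_exprn ?(ltW M0) // ler_pM2l // powR_inv_succ_le //.
  by apply: (ratio_expr_succ_le c0 s0 k1); apply: HK.
under eq_fun do rewrite eS.
apply: powR_inv_mul_cvg M0 _ => k; apply/andP.
by split; [exact: ratio_ge1 | exact: ratio_le_geometric].
Qed.
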